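(* Let $\mathcal C$ be a hyper-extensive category, $H\colon\mathcal C\to\mathcal C$ a functor preserving countable coproducts and having a terminal coalgebra, $a\colon HA\to A$ an $H$-algebra, and $e\colon X\to HX+A$ a morphism. Using the construction described in the context (giving $\bar X_n,\bar i_n^*,\hat e_n$ for $n\ge1$, $X_\infty$, $i_\infty$, $e_\infty$, and $a^n$): (i) for every coalgebra-to-algebra morphism $s\colon X_\infty\to A$ from $(X_\infty,e_\infty)$ to $(A,a)$ (i.e. $s=a\cdot Hs\cdot e_\infty$), the morphism $s^\dagger\colon X\to A$ determined by $s^\dagger\cdot\bar i_n^*=a^{n-1}\cdot\hat e_n$ for all $n\ge1$ and $s^\dagger\cdot i_\infty=s$ is a solution of $e$, i.e. $s^\dagger=[a,\mathrm{id}_A]\cdot(Hs^\dagger+\mathrm{id}_A)\cdot e$; (ii) every solution $g\colon X\to A$ of $e$ is of this form: $g\cdot i_\infty$ is a coalgebra-to-algebra morphism from $(X_\infty,e_\infty)$ to $(A,a)$ and $g=(g\cdot i_\infty)^\dagger$. Consequently, $s\mapsto s^\dagger$ is a bijection between coalgebra-to-algebra morphisms $(X_\infty,e_\infty)\to(A,a)$ and solutions of $e$.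
   Context: Hyper-extensive category: countable coproducts that are universal (pullbacks along arbitrary morphisms exist and preserve them), disjoint (injections monic, pairwise pullbacks initial), and coherent (a countable family of pairwise disjoint coproduct injections into $A$ has copairing a coproduct injection). Construction: put $X_0=X$. Pulling back $e$ along $\mathrm{inl}\colon HX\to HX+A$ and $\mathrm{inr}\colon A\to HX+A$ yields, by extensivity, a coproduct $X_0=X_1+\bar X_1$ with injections $i_1,\bar i_1$ and morphisms $e_1\colon X_1\to HX_0$, $\bar e_1\colon\bar X_1\to A$ with $e\cdot i_1=\mathrm{inl}\cdot e_1$ and $e\cdot\bar i_1=\mathrm{inr}\cdot\bar e_1$. Recursively, for $n\ge1$, given a coproduct $X_{n-1}=X_n+\bar X_n$ with injections $i_n,\bar i_n$ and $e_n\colon X_n\to HX_{n-1}$, since $HX_{n-1}$ is a coproduct of $HX_n$ and $H\bar X_n$ with injections $Hi_n,H\bar i_n$, pulling back $e_n$ along them yields a coproduct $X_n=X_{n+1}+\bar X_{n+1}$ with injections $i_{n+1},\bar i_{n+1}$ and $e_{n+1}\colon X_{n+1}\to HX_n$, $\bar e_{n+1}\colon\bar X_{n+1}\to H\bar X_n$ with $e_n\cdot i_{n+1}=Hi_n\cdot e_{n+1}$, $e_n\cdot\bar i_{n+1}=H\bar i_n\cdot\bar e_{n+1}$. Set $\bar i_n^*=i_1\cdot i_2\cdots i_{n-1}\cdot\bar i_n\colon\bar X_n\to X$ and $\hat e_n=H^{n-1}\bar e_1\cdot H^{n-2}\bar e_2\cdots H\bar e_{n-1}\cdot\bar e_n\colon\bar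 X_n\to H^{n-1}A$. The $\bar i_n^*$ ($n\ge1$) are pairwise disjoint coproduct injections, so by coherence $X=\coprod_{n\ge1}\bar X_n+X_\infty$ for a complementary injection $i_\infty\colon X_\infty\to X$, and there is a unique $e_\infty\colon X_\infty\to HX_\infty$ with $e\cdot i_\infty=\mathrm{inl}\cdot Hi_\infty\cdot e_\infty$. Finally $a^0=\mathrm{id}_A$ and $a^{n+1}=a\cdot Ha^n\colon H^{n+1}A\to A$. *)

Set Implicit Arguments.
Unset Strict Implicit.

Record Category := {
  ob : Type;
  hom : ob -> ob -> Type;
  idm : forall A, hom A A;
  comp : forall A B D, hom B D -> hom A B -> hom A D;
  comp_id_l : forall A B (f : hom A B), comp (idm B) f = f;
  comp_id_r : forall A B (f : hom A B), comp f (idm A) = f;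
  comp_assoc : forall A B D E (h : hom D E) (g : hom B D) (f : hom A B),
      comp h (comp g f) = comp (comp h g) f
}.
Arguments idm {c} A.
Arguments comp {c A B D} _ _.
Arguments hom {c} _ _.

Declare Scope cat_scope.
Notation "g \o f" := (comp g f) (at level 40, left associativity) : cat_scope.
Open Scope cat_scope.

Section Basics.
Variable C : Category.

Definition countable (I : Type) : Prop :=
  exists f : I -> nat, forall x y, f x = f y -> x = y.

Definition is_coproduct (I : Type) (F : I -> ob C) (P : ob C)
    (inj : forall i, hom (F i) P) : Prop :=
  forall (D : ob C) (f : forall i, hom (F i) D),
    exists! u : hom P D, forall i, u \o inj i = f i.

Definition is_bincoproduct (X Y P : ob C) (l : hom X P) (r : hom Y P) : Prop :=
  forall (D : ob C) (f : hom X D) (g : hom Y D),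
    exists! u : hom P D, u \o l = f /\ u \o r = g.

Definition is_coprod_inj (B P : ob C) (m : hom B P) : Prop :=
  exists (B' : ob C) (m' : hom B' P), is_bincoproduct m m'.

Definition is_initial (Z : ob C) : Prop :=
  forall D : ob C, exists! u : hom Z D, True.

Definition monic (X Y : ob C) (m : hom X Y) : Prop :=
  forall Z (f g : hom Z X), m \o f = m \o g -> f = g.

Definition is_pullback (A B D : ob C) (f : hom A D) (g : hom B D)
    (P : ob C) (p : hom P A) (q : hom P B) : Prop :=
  f \o p = g \o q /\
  forall Z (x : hom Z A) (y : hom Z B), f \o x = g \o y ->
    exists! u : hom Z P, p \o u = x /\ q \o u = y.

Definition has_countable_coproducts : Prop :=
  forall (I : Type), countable I -> forall F : I -> ob C,
    exists (P : ob C) (inj : forall i, hom (F i) P), is_coproduct inj.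

Definition universal_coproducts : Prop :=
  forall (I : Type), countable I -> forall (F : I -> ob C) (P : ob C)
    (inj : forall i, hom (F i) P), is_coproduct inj ->
  forall (D : ob C) (f : hom D P),
    (forall i, exists (Q : ob C) (p : hom Q (F i)) (q : hom Q D),
        is_pullback (inj i) f p q) /\
    (forall (Q : I -> ob C) (p : forall i, hom (Q i) (F i))
            (q : forall i, hom (Q i) D),
        (forall i, is_pullback (inj i) f (p i) (q i)) ->
        is_coproduct q).

Definition disjoint_coproducts : Prop :=
  forall (I : Type), countable I -> forall (F : I -> ob C) (P : ob C)
    (inj : forall i, hom (F i) P), is_coproduct inj ->
    (forall i, monic (inj i)) /\
    (forall i j, i <> j -> forall (Q : ob C) (p : hom Q (F i)) (q : hom Q (F j)),
        is_pullback (inj i) (inj j) p q -> is_initial Q).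

Definition coherent_coproducts : Prop :=
  forall (I : Type), countable I -> forall (B : I -> ob C) (P : ob C)
    (m : forall i, hom (B i) P),
    (forall i, is_coprod_inj (m i)) ->
    (forall i j, i <> j -> forall (Q : ob C) (p : hom Q (B i)) (q : hom Q (B j)),
        is_pullback (m i) (m j) p q -> is_initial Q) ->
    forall (S : ob C) (s : forall i, hom (B i) S), is_coproduct s ->
    forall u : hom S P, (forall i, u \o s i = m i) -> is_coprod_inj u.

Definition hyper_extensive : Prop :=
  has_countable_coproducts /\ universal_coproducts /\
  disjoint_coproducts /\ coherent_coproducts.

End Basics.

Record Functor (C : Category) := {
  fobj :> ob C -> ob C;
  fmap : forall A B, hom A B -> hom (fobj A) (fobj B);
  fmap_id : forall A, fmap (idm A) = idm (fobj A);
  fmap_comp : forall A B D (g : hom B D) (f : hom A B),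
      fmap (g \o f) = fmap g \o fmap f
}.
Arguments fmap {C} _ {A B} _.

Section FunctorDefs.
Variables (C : Category) (H : Functor C).

Definition preserves_countable_coproducts : Prop :=
  forall (I : Type), countable I -> forall (F : I -> ob C) (P : ob C)
    (inj : forall i, hom (F i) P), is_coproduct inj ->
    is_coproduct (fun i => fmap H (inj i)).

Definition has_terminal_coalgebra : Prop :=
  exists (T : ob C) (t : hom T (H T)),
    forall (Y : ob C) (y : hom Y (H Y)),
      exists! h : hom Y T, t \o h = fmap H h \o y.

Fixpoint Hn (n : nat) (A : ob C) : ob C :=
  match n with 0 => A | S k => H (Hn k A) end.

Fixpoint apow (A : ob C) (a : hom (H A) A) (n : nat) : hom (Hn n A) A :=
  match n return hom (Hn n A) A with
  | 0 => idm A
  | S k => a \o fmap H (apow a k)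
  end.

(* Indexing conventions (shifted by one w.r.t. the paper):
   Xs k = X_k (so Xs 0 = X), ii k = i_{k+1} : X_{k+1} -> X_k,
   Xb k = bar X_{k+1}, ib k = bar i_{k+1} : bar X_{k+1} -> X_k,
   es k = e_{k+1} : X_{k+1} -> H X_k,
   eb1 = bar e_1 : bar X_1 -> A, ebs k = bar e_{k+2} : bar X_{k+2} -> H bar X_{k+1}. *)

Fixpoint incl (Xs : nat -> ob C) (ii : forall k, hom (Xs (S k)) (Xs k)) (k : nat)
  : hom (Xs k) (Xs 0) :=
  match k return hom (Xs k) (Xs 0) with
  | 0 => idm (Xs 0)
  | S j => incl ii j \o ii j
  end.

(* istar k = bar i*_{k+1} = i_1 ... i_k . bar i_{k+1} *)
Definition istar (Xs Xb : nat -> ob C) (ii : forall k, hom (Xs (S k)) (Xs k))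
    (ib : forall k, hom (Xb k) (Xs k)) (k : nat) : hom (Xb k) (Xs 0) :=
  incl ii k \o ib k.

(* ehat k = hat e_{k+1} = H^k bar e_1 . ... . H bar e_k . bar e_{k+1} *)
Fixpoint ehat (A : ob C) (Xb : nat -> ob C) (eb1 : hom (Xb 0) A)
    (ebs : forall k, hom (Xb (S k)) (H (Xb k))) (k : nat) : hom (Xb k) (Hn k A) :=
  match k return hom (Xb k) (Hn k A) with
  | 0 => eb1
  | S j => fmap H (ehat eb1 ebs j) \o ebs j
  end.

Definition ofam (F : nat -> ob C) (Z : ob C) (o : option nat) : ob C :=
  match o with Some k => F k | None => Z end.

Definition oinj (F : nat -> ob C) (Z W : ob C) (f : forall k, hom (F k) W)
    (z : hom Z W) (o : option nat) : hom (ofam F Z o) W :=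
  match o return hom (ofam F Z o) W with Some k => f k | None => z end.

(* g : X -> A is a solution of e : X -> HX + A (coproduct (SA, inl, inr)):
   g = [a, id] . (H g + id) . e, i.e. g = [a . H g, id] . e *)
Definition is_solution (X A SA : ob C) (a : hom (H A) A)
    (inl : hom (H X) SA) (inr : hom A SA) (e : hom X SA) (g : hom X A) : Prop :=
  exists c : hom SA A, c \o inl = a \o fmap H g /\ c \o inr = idm A /\ g = c \o e.

Definition coalg_to_alg (Y A : ob C) (y : hom Y (H Y)) (a : hom (H A) A)
    (s : hom Y A) : Prop :=
  s = a \o fmap H s \o y.

End FunctorDefs.

(* Along ī*_n the morphism e factors through the first n levels of the
   construction: the solution equation for g restricted to X̄_1 reads
   g·ī*_1 = ē_1, and restricted to X̄_{n+1} it expresses g·ī*_{n+1} as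
   a·H(g·ī*_n)·ē_{n+1}; so by induction it pins down g·ī*_n = a^{n-1}·ê_n.
   Restricted to X_∞ it says exactly that g·i_∞ is a coalgebra-to-algebra
   morphism. As X = ∐_n X̄_n + X_∞, a morphism out of X is determined by these
   restrictions, which gives both directions. *)
From Stdlib Require Import Setoid.

Lemma coproduct_ext {C : Category} {I : Type} {F : I -> ob C} {P : ob C}
    {inj : forall i, hom (F i) P} {D : ob C} (u v : hom P D) :
  is_coproduct inj -> (forall i, u \o inj i = v \o inj i) -> u = v.
Proof.
  intros Hcop Huv.
  destruct (Hcop D (fun i => v \o inj i)) as [w [_ Hw]].
  rewrite <- (Hw u Huv). apply Hw. reflexivity.
Qed.

Section Unfolding.
Context {C : Category} {H : Functor C} {A : ob C} {a : hom (H A) A}.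
Context {Xs : nat -> ob C} {SA : ob C}
  {inl : hom (H (Xs 0)) SA} {inr : hom A SA} {e : hom (Xs 0) SA}.
Context {ii : forall k, hom (Xs (S k)) (Xs k)}
  {Xb : nat -> ob C} {ib : forall k, hom (Xb k) (Xs k)}
  {es : forall k, hom (Xs (S k)) (H (Xs k))}
  {eb1 : hom (Xb 0) A} {ebs : forall k, hom (Xb (S k)) (H (Xb k))}.
Context {Xinf : ob C} {iinf : hom Xinf (Xs 0)} {einf : hom Xinf (H Xinf)}.

Hypothesis e_ii0 : e \o ii 0 = inl \o es 0.
Hypothesis e_ib0 : e \o ib 0 = inr \o eb1.
Hypothesis es_ii : forall k, es k \o ii (S k) = fmap H (ii k) \o es (S k).
Hypothesis es_ib : forall k, es k \o ib (S k) = fmap H (ib k) \o ebs k.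
Hypothesis e_iinf : e \o iinf = inl \o fmap H iinf \o einf.

Lemma e_incl_S (k : nat) :
  e \o incl ii (S k) = inl \o fmap H (incl ii k) \o es k.
Proof.
  induction k as [|k IH]; simpl.
  - rewrite comp_id_l, e_ii0, fmap_id, comp_id_r. reflexivity.
  - simpl in IH.
    rewrite comp_assoc, IH, <- !comp_assoc, es_ii, !comp_assoc.
    rewrite <- (comp_assoc inl), <- fmap_comp. reflexivity.
Qed.

Lemma e_istar_0 : e \o istar ii ib 0 = inr \o eb1.
Proof. unfold istar; simpl. rewrite comp_id_l. exact e_ib0. Qed.

Lemma e_istar_S (k : nat) :
  e \o istar ii ib (S k) = inl \o fmap H (istar ii ib k) \o ebs k.
Proof.
  unfold istar.
  rewrite comp_assoc, e_incl_S, <- !comp_assoc, es_ib, !comp_assoc.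
  rewrite <- (comp_assoc inl), <- fmap_comp. reflexivity.
Qed.

(* [c] is the copairing [a·Ht, id], so that [c \o e] is the right-hand side
   of the solution equation for [t]. *)
Context {t : hom (Xs 0) A} {c : hom SA A}.
Hypothesis c_inl : c \o inl = a \o fmap H t.
Hypothesis c_inr : c \o inr = idm A.

Lemma unfold_istar_0 : c \o e \o istar ii ib 0 = apow a 0 \o ehat eb1 ebs 0.
Proof.
  rewrite <- comp_assoc, e_istar_0, comp_assoc, c_inr. simpl.
  rewrite !comp_id_l. reflexivity.
Qed.

Lemma unfold_istar_S (k : nat) :
  t \o istar ii ib k = apow a k \o ehat eb1 ebs k ->
  c \o e \o istar ii ib (S k) = apow a (S k) \o ehat eb1 ebs (S k).
Proof.
  intros Htk. simpl.
  rewrite <- comp_assoc, e_istar_S, !comp_assoc, c_inl.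
  rewrite <- (comp_assoc a), <- fmap_comp, Htk, !fmap_comp, <- !comp_assoc.
  reflexivity.
Qed.

Lemma unfold_iinf : c \o e \o iinf = a \o fmap H (t \o iinf) \o einf.
Proof.
  rewrite <- comp_assoc, e_iinf, !comp_assoc, c_inl.
  rewrite <- (comp_assoc a), <- fmap_comp. reflexivity.
Qed.

End Unfolding.

Theorem mainTheorem3 (C : Category) (HC : hyper_extensive C)
  (H : Functor C) (HH : preserves_countable_coproducts H)
  (HT : has_terminal_coalgebra H)
  (A : ob C) (a : hom (H A) A)
  (Xs : nat -> ob C)                 (* Xs k = X_k, X = Xs 0 *)
  (SA : ob C) (inl : hom (H (Xs 0)) SA) (inr : hom A SA)
  (HSA : is_bincoproduct inl inr)    (* SA = HX + A *)
  (e : hom (Xs 0) SA)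
  (ii : forall k, hom (Xs (S k)) (Xs k))
  (Xb : nat -> ob C) (ib : forall k, hom (Xb k) (Xs k))
  (es : forall k, hom (Xs (S k)) (H (Xs k)))
  (eb1 : hom (Xb 0) A) (ebs : forall k, hom (Xb (S k)) (H (Xb k)))
  (Hdec : forall k, is_bincoproduct (ii k) (ib k))
  (Hpb_inl : is_pullback e inl (ii 0) (es 0))
  (Hpb_inr : is_pullback e inr (ib 0) eb1)
  (Hpb_i : forall k, is_pullback (es k) (fmap H (ii k)) (ii (S k)) (es (S k)))
  (Hpb_ib : forall k, is_pullback (es k) (fmap H (ib k)) (ib (S k)) (ebs k))
  (Xinf : ob C) (iinf : hom Xinf (Xs 0))
  (Hcop : is_coproduct (oinj (F := Xb) (istar ii ib) iinf))
  (einf : hom Xinf (H Xinf))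
  (Heinf : e \o iinf = inl \o fmap H iinf \o einf) :
  (* (i) *)
  (forall s : hom Xinf A, coalg_to_alg einf a s ->
     (exists! t : hom (Xs 0) A,
        (forall k, t \o istar ii ib k = apow a k \o ehat eb1 ebs k) /\ t \o iinf = s) /\
     (forall t : hom (Xs 0) A,
        (forall k, t \o istar ii ib k = apow a k \o ehat eb1 ebs k) -> t \o iinf = s ->
        is_solution a inl inr e t)) /\
  (* (ii) *)
  (forall g : hom (Xs 0) A, is_solution a inl inr e g ->
     coalg_to_alg einf a (g \o iinf) /\
     (forall k, g \o istar ii ib k = apow a k \o ehat eb1 ebs k)).
Proof.
  pose proof (fun k => proj1 (Hpb_i k)) as es_ii.
  pose proof (fun k => proj1 (Hpb_ib k)) as es_ib.
  split; [intros s Hs; split|].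
  - destruct (Hcop A (oinj (fun k => apow a k \o ehat eb1 ebs k) s))
      as [t [Ht Huniq]].
    exists t. split.
    + exact (conj (fun k => Ht (Some k)) (Ht None)).
    + intros t' [Ht'k Ht'inf]. apply Huniq. intros [k|]; simpl; auto.
  - intros t Htk Htinf.
    destruct (HSA A (a \o fmap H t) (idm A)) as [c [[Hl Hr] _]].
    exists c. repeat split; auto.
    apply (coproduct_ext _ _ Hcop). intros [[|k]|]; simpl; symmetry.
    + rewrite Htk. exact (unfold_istar_0 (proj1 Hpb_inr) Hr).
    + rewrite Htk. exact (unfold_istar_S (proj1 Hpb_inl) es_ii es_ib Hl k (Htk k)).
    + rewrite (unfold_iinf Heinf Hl), Htinf. symmetry. exact Hs.
  - intros g [c [Hl [Hr Hg]]]. split.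
    + unfold coalg_to_alg. rewrite Hg at 1. exact (unfold_iinf Heinf Hl).
    + induction k as [|k IH]; rewrite Hg at 1.
      * exact (unfold_istar_0 (proj1 Hpb_inr) Hr).
      * exact (unfold_istar_S (proj1 Hpb_inl) es_ii es_ib Hl k IH).
Qed.
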